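(* Let $\mathfrak f_3$ be the Lie algebra with basis $e_1,e_2,e_3,\alpha,\beta,\gamma$, brackets $[e_1,e_2]=\alpha$, $[e_2,e_3]=\beta$, $[e_3,e_1]=\gamma$, and $\alpha,\beta,\gamma$ central; let $\mathfrak z=\mathrm{span}(\alpha,\beta,\gamma)$. Consider linear maps $\delta:\mathfrak f_3\to\Lambda^2\mathfrak f_3$ with $\delta(\mathfrak z)=0$ and $\delta(e_i)=e_i\wedge A_i+\omega_i$ ($i=1,2,3$) for some $A_i\in\mathfrak z$, $\omega_i\in\Lambda^2\mathfrak z$. Such a $\delta$ is a Lie bialgebra structure if and only if there exist $a,b,c\in k$ with $A_1=a\alpha+b\beta+c\gamma$, $A_2=a\alpha-b\beta-c\gamma$, $A_3=-a\alpha-b\beta+c\gamma$, and $\omega_i\wedge A_i=0$ in $\Lambda^3\mathfrak z$ for $i=1,2,3$.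
   Context: The field $k$ has characteristic zero. A Lie bialgebra structure is a linear $\delta:\mathfrak g\to\Lambda^2\mathfrak g$ satisfying co-Jacobi (in Sweedler notation $\delta(x)=x_1\wedge x_2$: $\delta(x_1)\wedge x_2-x_1\wedge\delta(x_2)=0$ in $\Lambda^3\mathfrak g$) and the 1-cocycle condition $\delta[x,y]=[\delta x,y]+[x,\delta y]$ for the adjoint action on $\Lambda^2\mathfrak g$. *)

From HB Require Import structures.
From mathcomp Require Import all_boot all_order all_algebra.
Set Implicit Arguments. Unset Strict Implicit. Unset Printing Implicit Defensive.
Import Order.TTheory GRing.Theory.
Local Open Scope ring_scope.

(* The Lie algebra f_3 is modelled on k^6 (row vectors 'rV[k]_6) with basis
   index 0,1,2 = e1,e2,e3 and 3,4,5 = alpha,beta,gamma. *)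

Definition ix (n : nat) : 'I_6 := @inord 5 n.

Definition eb (k : fieldType) (i : 'I_6) : 'rV[k]_6 := delta_mx 0 i.

Definition e_of3 (i : 'I_3) : 'I_6 := @widen_ord 3 6 isT i.

Definition br (k : fieldType) (x y : 'rV[k]_6) : 'rV[k]_6 :=
  (x 0 (ix 0) * y 0 (ix 1) - x 0 (ix 1) * y 0 (ix 0)) *: eb k (ix 3)
+ (x 0 (ix 1) * y 0 (ix 2) - x 0 (ix 2) * y 0 (ix 1)) *: eb k (ix 4)
+ (x 0 (ix 2) * y 0 (ix 0) - x 0 (ix 0) * y 0 (ix 2)) *: eb k (ix 5).

(* Lambda^2 of k^6 is modelled by skew-symmetric 6x6 matrices; the wedge
   x /\ y has entries (x_i y_j - x_j y_i), so e_p /\ e_q = E_pq - E_qp. *)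
Definition wedge2 (k : fieldType) (x y : 'rV[k]_6) : 'M[k]_6 :=
  \matrix_(i, j) (x 0 i * y 0 j - x 0 j * y 0 i).

Definition skew (k : fieldType) (M : 'M[k]_6) : Prop := M^T = - M.

(* Lambda^3 of k^6 is modelled by alternating trilinear coefficient functions,
   u/\v/\w having coefficients det[[u_i,u_j,u_l],[v_i,v_j,v_l],[w_i,w_j,w_l]]. *)
Definition L3 (k : fieldType) := 'I_6 -> 'I_6 -> 'I_6 -> k.
Definition zero3 (k : fieldType) (T : L3 k) : Prop := forall i j l, T i j l = 0.

Definition wedge21 (k : fieldType) (M : 'M[k]_6) (w : 'rV[k]_6) : L3 k :=
  fun i j l => M i j * w 0 l + M j l * w 0 i + M l i * w 0 j.
Definition wedge12 (k : fieldType) (w : 'rV[k]_6) (M : 'M[k]_6) : L3 k :=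
  fun i j l => w 0 i * M j l - w 0 j * M i l + w 0 l * M i j.

Definition delta_of (k : fieldType) (d : 'I_6 -> 'M[k]_6) (x : 'rV[k]_6) : 'M[k]_6 :=
  \sum_(p < 6) x 0 p *: d p.

(* co-Jacobi expression delta(x_1) /\ x_2 - x_1 /\ delta(x_2), where
   delta(x) = sum_{p<q} c_pq e_p /\ e_q and x_1 (x) x_2 = sum_{p<q} c_pq e_p (x) e_q *)
Definition coJac (k : fieldType) (d : 'I_6 -> 'M[k]_6) (x : 'rV[k]_6) : L3 k :=
  fun i j l => \sum_(p < 6) \sum_(q < 6 | (p < q)%N)
     (delta_of d x) p q * (wedge21 (d p) (eb k q) i j l - wedge12 (eb k p) (d q) i j l).

(* matrix of ad_x : v |-> [x,v] acting on row vectors: [x,v] = v *m adm x *)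
Definition adm (k : fieldType) (x : 'rV[k]_6) : 'M[k]_6 :=
  \matrix_(i, j) (br x (eb k i)) 0 j.

(* adjoint action on Lambda^2: [x, y/\z] = [x,y]/\z + y/\[x,z] *)
Definition ad2 (k : fieldType) (x : 'rV[k]_6) (M : 'M[k]_6) : 'M[k]_6 :=
  (adm x)^T *m M + M *m adm x.

(* Lie bialgebra structure on f_3: delta lands in Lambda^2, co-Jacobi, and the
   1-cocycle condition delta[x,y] = [delta x, y] + [x, delta y]
   = ad_x(delta y) - ad_y(delta x). *)
Definition is_Lie_bialgebra (k : fieldType) (d : 'I_6 -> 'M[k]_6) : Prop :=
  (forall p, skew (d p)) /\
  (forall x, zero3 (coJac d x)) /\
  (forall x y, delta_of d (br x y) = ad2 x (delta_of d y) - ad2 y (delta_of d x)).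

Definition inZ (k : fieldType) (v : 'rV[k]_6) : Prop :=
  forall j : 'I_6, (j < 3)%N -> v 0 j = 0.
Definition inL2Z (k : fieldType) (M : 'M[k]_6) : Prop :=
  skew M /\ forall i j : 'I_6, ((i < 3)%N || (j < 3)%N) -> M i j = 0.

Definition i3 (n : nat) : 'I_3 := @inord 2 n.

(* For every x, ad_x acts on Lambda^2 as a derivation, vanishes on the centre z and on
   Lambda^2 z, and delta vanishes on [f_3, f_3] = z.  The cocycle condition therefore
   reduces to [e_i, e_j] /\ (A_i + A_j) = 0, i.e. A_1 + A_2, A_2 + A_3, A_3 + A_1 lie on
   the lines of alpha, beta, gamma respectively, which is exactly the stated shape of the
   A_i.  In the co-Jacobi expression of x only the pairs (e_i, z) survive, since omega_i
   has both legs in z where delta vanishes; they add up to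
   sum_i x_i (e_i /\ A_i + omega_i) /\ A_i = sum_i x_i omega_i /\ A_i. *)

From Pilot Require Import Defs.
From mathcomp Require Import all_boot all_algebra ring.
Import GRing.Theory.
Set Implicit Arguments. Unset Strict Implicit. Unset Printing Implicit Defensive.
Local Open Scope ring_scope.

Lemma ix_val n : (n < 6)%N -> ix n = n :> nat.
Proof. by move=> ?; rewrite /ix inordK. Qed.

Lemma eq_ix m n : (m < 6)%N -> (n < 6)%N -> (ix m == ix n) = (m == n).
Proof. by move=> ? ?; rewrite -val_eqE /= !ix_val. Qed.

Lemma ix_ord (p : 'I_6) : p = ix p.
Proof. by rewrite /ix inord_val. Qed.

Lemma e_of3_i3 n : (n < 3)%N -> e_of3 (i3 n) = ix n.
Proof.
by move=> ?; apply/val_inj; rewrite /= /i3 inordK ?ix_val // (ltn_trans _ (isT : 3 < 6)%N).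
Qed.

Lemma big_ord6 (V : nmodType) (F : 'I_6 -> V) :
  \sum_(p < 6) F p = F (ix 0) + F (ix 1) + F (ix 2) + F (ix 3) + F (ix 4) + F (ix 5).
Proof.
rewrite !big_ord_recr big_ord0 /= add0r.
by congr (_ + _ + _ + _ + _ + _); congr F; apply/val_inj; rewrite /= ix_val.
Qed.

Lemma big_ord3 (V : nmodType) (F : 'I_3 -> V) :
  \sum_(n < 3) F n = F (i3 0) + F (i3 1) + F (i3 2).
Proof.
rewrite !big_ord_recr big_ord0 /= add0r.
by congr (_ + _ + _); congr F; apply/val_inj; rewrite /= /i3 inordK.
Qed.

Section Bracket.
Variable k : fieldType.
Implicit Types (x y u v : 'rV[k]_6) (M : 'M[k]_6) (d : 'I_6 -> 'M[k]_6).

Lemma ebE (i j : 'I_6) : eb k i 0 j = (j == i)%:R.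
Proof. by rewrite mxE eqxx. Qed.

Lemma inZ_decomp (v : 'rV[k]_6) : inZ v ->
  v = v 0 (ix 3) *: eb k (ix 3) + v 0 (ix 4) *: eb k (ix 4) + v 0 (ix 5) *: eb k (ix 5).
Proof.
move=> vZ; apply/rowP => j; rewrite !mxE !eqxx /=.
rewrite [j]ix_ord; case: j => -[|[|[|[|[|[|//]]]]]] /= ?;
  rewrite !eq_ix //= ?mulr0 ?mulr1 ?addr0 ?add0r //; by apply: vZ; rewrite ix_val.
Qed.

Lemma br_inZ x y : inZ (br x y).
Proof.
move=> j hj; have ne m : (3 <= m < 6)%N -> (j == ix m) = false.
  by case/andP=> h3 h6; apply/negbTE; apply: contraTneq hj => ->; rewrite ix_val // -leqNgt.
by rewrite !mxE !ne // !andbF !mulr0 !addr0.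
Qed.

Lemma br_centralr x v : inZ v -> br x v = 0.
Proof. by move=> vZ; rewrite /br !vZ ?ix_val // !mulr0 !subrr !scale0r !addr0. Qed.

Lemma mul_adm x v : v *m adm x = br x v.
Proof.
by apply/rowP => j; rewrite !mxE big_ord6 !mxE !eqxx /= !eq_ix //=; ring.
Qed.

Lemma mulmx_adm_eq0 x M : (forall i j : 'I_6, (j < 3)%N -> M i j = 0) -> M *m adm x = 0.
Proof.
move=> MZ; apply/row_matrixP => i; rewrite row_mul mul_adm row0.
by apply: br_centralr => j hj; rewrite mxE; apply: MZ.
Qed.

Lemma wedge2E u v : wedge2 u v = u^T *m v - v^T *m u.
Proof. by apply/matrixP => i j; rewrite !mxE !big_ord1 !mxE (mulrC (v _ i)). Qed.

Lemma ad2_wedge2 x u v : ad2 x (wedge2 u v) = wedge2 (br x u) v + wedge2 u (br x v).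
Proof.
rewrite /ad2 !wedge2E mulmxBr mulmxBl !mulmxA -!trmx_mul -!mulmxA !mul_adm.
by rewrite addrACA [RHS]addrACA; congr (_ + _); rewrite addrC.
Qed.

Lemma ad2D x M N : ad2 x (M + N) = ad2 x M + ad2 x N.
Proof. by rewrite /ad2 mulmxDr mulmxDl addrACA. Qed.

Lemma ad2_inL2Z x M : inL2Z M -> ad2 x M = 0.
Proof.
case=> Mskew MZ; have MadmZ : M *m adm x = 0.
  by apply: mulmx_adm_eq0 => i j hj; rewrite MZ ?hj ?orbT.
by rewrite /ad2 -[_ *m M]trmxK trmx_mul trmxK Mskew mulNmx MadmZ oppr0 trmx0 addr0.
Qed.

Lemma delta_ofE d x p q : delta_of d x p q = \sum_(n < 6) x 0 n * d n p q.
Proof. by rewrite summxE; apply: eq_bigr => n _; rewrite mxE. Qed.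

Lemma delta_of_inZ d v : (forall p : 'I_6, (3 <= p)%N -> d p = 0) -> inZ v -> delta_of d v = 0.
Proof.
move=> dz vZ; apply: big1 => p _.
by case: (ltnP p 3) => hp; [rewrite vZ ?scale0r | rewrite dz ?scaler0].
Qed.

Lemma ad2_delta_of x d y : ad2 x (delta_of d y) = delta_of (fun p => ad2 x (d p)) y.
Proof.
rewrite /ad2 /delta_of mulmx_sumr mulmx_suml -big_split /=.
by apply: eq_bigr => p _; rewrite -scalemxAr -scalemxAl scalerDr.
Qed.

Lemma wedge2_eb_eq0 p v : wedge2 (eb k p) v = 0 <-> forall q, q != p -> v 0 q = 0.
Proof.
split=> [/matrixP vp q qp | vp].
  by move: (vp p q); rewrite !mxE !eqxx (negPf qp) /= mul1r mul0r subr0.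
apply/matrixP => i j; rewrite !mxE !eqxx /=.
case: (eqVneq i p) => [->|ip]; case: (eqVneq j p) => [->|jp] /=;
  by rewrite ?mul1r ?mul0r ?subrr ?subr0 ?sub0r ?vp ?oppr0.
Qed.

Lemma wedge2_0r u : wedge2 u 0 = 0.
Proof. by apply/matrixP => i j; rewrite !mxE !mulr0 subrr. Qed.

Lemma skew_wedge2 u v : Defs.skew (wedge2 u v).
Proof. by rewrite /Defs.skew; apply/matrixP => i j; rewrite !mxE opprB. Qed.

Lemma axis_sums_iff (u0 u1 u2 : 'rV[k]_6) : inZ u0 -> inZ u1 -> inZ u2 ->
  [/\ wedge2 (eb k (ix 3)) (u0 + u1) = 0, wedge2 (eb k (ix 4)) (u1 + u2) = 0
    & wedge2 (eb k (ix 5)) (u2 + u0) = 0] <->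
  exists a b c : k,
    [/\ u0 = a *: eb k (ix 3) + b *: eb k (ix 4) + c *: eb k (ix 5),
        u1 = a *: eb k (ix 3) - b *: eb k (ix 4) - c *: eb k (ix 5)
      & u2 = - a *: eb k (ix 3) - b *: eb k (ix 4) + c *: eb k (ix 5)].
Proof.
move=> Z0 Z1 Z2; split=> [[s3 s4 s5] | [a [b [c [-> -> ->]]]]]; last first.
  by split; apply/wedge2_eb_eq0 => q /negPf nq; rewrite !mxE !eqxx nq /=; ring.
have opp_coord (u v : 'rV[k]_6) p q : wedge2 (eb k (ix p)) (u + v) = 0 ->
    (p < 6)%N -> (q < 6)%N -> p != q -> u 0 (ix q) = - v 0 (ix q).
  move=> /wedge2_eb_eq0 uv hp hq pq; apply/eqP; rewrite -addr_eq0.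
  by move: (uv (ix q)); rewrite eq_ix // eq_sym pq mxE => /(_ isT) ->.
exists (u0 0 (ix 3)), (u0 0 (ix 4)), (u0 0 (ix 5)); split; first exact: inZ_decomp Z0.
- rewrite {1}(inZ_decomp Z1) (opp_coord _ _ 4%N 3%N s4) // (opp_coord _ _ 5%N 3%N s5) //.
  by rewrite (opp_coord _ _ 3%N 4%N s3) // (opp_coord _ _ 3%N 5%N s3) // !scaleNr !opprK.
- rewrite {1}(inZ_decomp Z2) (opp_coord _ _ 5%N 3%N s5) // (opp_coord _ _ 5%N 4%N s5) //.
  by rewrite (opp_coord _ _ 3%N 5%N s3) // (opp_coord _ _ 4%N 5%N s4) // opprK !scaleNr.
Qed.

End Bracket.

Section Shape.
Variables (k : fieldType) (A : 'I_3 -> 'rV[k]_6) (w : 'I_3 -> 'M[k]_6) (d : 'I_6 -> 'M[k]_6).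
Hypotheses (AZ : forall i, inZ (A i)) (wZ : forall i, inL2Z (w i))
  (dz : forall p : 'I_6, (3 <= p)%N -> d p = 0)
  (de : forall i : 'I_3, d (e_of3 i) = wedge2 (eb k (e_of3 i)) (A i) + w i).

Lemma d_ix n : (n < 3)%N -> d (ix n) = wedge2 (eb k (ix n)) (A (i3 n)) + w (i3 n).
Proof. by move=> hn; rewrite -e_of3_i3 // de. Qed.

Lemma skew_d p : Defs.skew (d p).
Proof.
rewrite /Defs.skew; case: (ltnP p 3) => hp; last by rewrite dz // trmx0 oppr0.
by rewrite (ix_ord p) d_ix // raddfD /= skew_wedge2 (wZ _).1 opprD.
Qed.

Lemma ad2_d x p :
  ad2 x (d p) = if (p < 3)%N then wedge2 (br x (eb k p)) (A (i3 p)) else 0.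
Proof.
case: ltnP => hp; last by rewrite dz // /ad2 mulmx0 mul0mx addr0.
rewrite {1}(ix_ord p) d_ix // ad2D ad2_wedge2 (br_centralr x (AZ _)) wedge2_0r addr0.
by rewrite ad2_inL2Z // addr0 -ix_ord.
Qed.

Lemma cocycle_defect x y :
  ad2 x (delta_of d y) - ad2 y (delta_of d x) =
    (x 0 (ix 0) * y 0 (ix 1) - x 0 (ix 1) * y 0 (ix 0)) *: wedge2 (eb k (ix 3)) (A (i3 0) + A (i3 1))
  + (x 0 (ix 1) * y 0 (ix 2) - x 0 (ix 2) * y 0 (ix 1)) *: wedge2 (eb k (ix 4)) (A (i3 1) + A (i3 2))
  + (x 0 (ix 2) * y 0 (ix 0) - x 0 (ix 0) * y 0 (ix 2)) *: wedge2 (eb k (ix 5)) (A (i3 2) + A (i3 0)).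
Proof.
rewrite !ad2_delta_of /delta_of !big_ord6 !ad2_d !ix_val //= !scaler0 !addr0.
by apply/matrixP => i j; rewrite !mxE !eqxx /= !eq_ix //=; ring.
Qed.

Lemma cocycle_iff :
  (forall x y, delta_of d (br x y) = ad2 x (delta_of d y) - ad2 y (delta_of d x)) <->
  [/\ wedge2 (eb k (ix 3)) (A (i3 0) + A (i3 1)) = 0,
       wedge2 (eb k (ix 4)) (A (i3 1) + A (i3 2)) = 0 &
       wedge2 (eb k (ix 5)) (A (i3 2) + A (i3 0)) = 0].
Proof.
have br0 x y : delta_of d (br x y) = 0 := delta_of_inZ dz (br_inZ x y).
split=> [cocycle | [h3 h4 h5] x y]; last first.
  by rewrite br0 cocycle_defect h3 h4 h5 !scaler0 !addr0.
have at_basis m n := cocycle (eb k (ix m)) (eb k (ix n)).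
move: (at_basis 0%N 1%N) (at_basis 1%N 2%N) (at_basis 2%N 0%N).
rewrite !br0 !cocycle_defect !ebE !eq_ix //=.
rewrite !(mulr0, mul0r, mulr1, subr0, sub0r, oppr0, scale0r, scale1r, addr0, add0r).
by move=> /esym h3 /esym h4 /esym h5.
Qed.

Lemma d_ixE n p q : (n < 3)%N ->
  d (ix n) p q = (p == ix n)%:R * A (i3 n) 0 q - (q == ix n)%:R * A (i3 n) 0 p + w (i3 n) p q.
Proof. by move=> hn; rewrite d_ix // !mxE !eqxx. Qed.

Lemma coJac_shape x i j l :
  coJac d x i j l = \sum_(n < 3) x 0 (e_of3 n) * wedge21 (w n) (A n) i j l.
Proof.
have w_ix m : (m < 3)%N -> (forall n q, w n (ix m) q = 0) /\ (forall n q, w n q (ix m) = 0).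
  by move=> hm; split=> n q; apply: (wZ n).2; rewrite ix_val ?hm ?orbT // (ltn_trans hm).
have [w0 w0'] := w_ix 0%N isT; have [w1 w1'] := w_ix 1%N isT; have [w2 w2'] := w_ix 2%N isT.
have A_ix m : (m < 3)%N -> forall n, A n 0 (ix m) = 0.
  by move=> hm n; apply: AZ; rewrite ix_val // (ltn_trans hm).
have A0 := A_ix 0%N isT; have A1 := A_ix 1%N isT; have A2 := A_ix 2%N isT.
have d_z m : (3 <= m < 6)%N -> forall p q, d (ix m) p q = 0.
  by case/andP=> m3 m6 p q; rewrite dz ?ix_val // mxE.
(* [ring] sees the cancellation (e_n /\ A n) /\ A n = 0 only once the entries of [A n] at
   the free indices are written in coordinates. *)
have A_coord n q : A n 0 q = A n 0 (ix 3) * (q == ix 3)%:R + A n 0 (ix 4) * (q == ix 4)%:R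
                            + A n 0 (ix 5) * (q == ix 5)%:R.
  by rewrite {1}(inZ_decomp (AZ n)) !mxE !eqxx.
rewrite big_ord3 !e_of3_i3 // /coJac; under eq_bigr => p _ do rewrite big_mkcond big_ord6.
rewrite big_ord6 !ix_val //= !delta_ofE !big_ord6 /wedge21 /wedge12 !ebE.
rewrite !(d_z 3%N) // !(d_z 4%N) // !(d_z 5%N) // !d_ixE // !eq_ix //=.
rewrite ?A0 ?A1 ?A2 ?w0 ?w0' ?w1 ?w1' ?w2 ?w2' !(A_coord _ i) !(A_coord _ j) !(A_coord _ l).
ring.
Qed.

Lemma coJacobi_iff :
  (forall x, zero3 (coJac d x)) <-> forall n, zero3 (wedge21 (w n) (A n)).
Proof.
split=> [coJ n i j l | wA x i j l]; last by rewrite coJac_shape big1 // => n _; rewrite wA mulr0.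
have e_of3_eq m : (e_of3 m == e_of3 n) = (m == n).
  by apply/eqP/eqP => [h | ->] //; apply/val_inj; exact: (congr1 val h).
move: (coJ (eb k (e_of3 n)) i j l); rewrite coJac_shape (bigD1 n) //= big1 => [|m mn].
  by rewrite ebE eqxx mul1r addr0.
by rewrite ebE e_of3_eq (negPf mn) mul0r.
Qed.

End Shape.

Theorem mainTheorem18 (k : fieldType) (hchar : [pchar k] =i pred0)
  (A : 'I_3 -> 'rV[k]_6) (w : 'I_3 -> 'M[k]_6) (d : 'I_6 -> 'M[k]_6)
  (hA : forall i, inZ (A i)) (hw : forall i, inL2Z (w i))
  (hz : forall p : 'I_6, (3 <= p)%N -> d p = 0)
  (he : forall i : 'I_3, d (e_of3 i) = wedge2 (eb k (e_of3 i)) (A i) + w i) :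
  is_Lie_bialgebra d <->
  (exists a b c : k,
     [/\ A (i3 0) = a *: eb k (ix 3) + b *: eb k (ix 4) + c *: eb k (ix 5),
         A (i3 1) = a *: eb k (ix 3) - b *: eb k (ix 4) - c *: eb k (ix 5),
         A (i3 2) = - a *: eb k (ix 3) - b *: eb k (ix 4) + c *: eb k (ix 5)
       & forall i : 'I_3, zero3 (wedge21 (w i) (A i))]).
Proof.
have cocycle := cocycle_iff hA hw hz he.
have coJacobi := coJacobi_iff hA hw hz he.
have axes := axis_sums_iff (hA (i3 0)) (hA (i3 1)) (hA (i3 2)).
split=> [[_ [/coJacobi wA /cocycle /axes [a [b [c [A0 A1 A2]]]]]] | [a [b [c [A0 A1 A2 wA]]]]].
  by exists a, b, c.
split; first exact: skew_d hw hz he.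
by split; [apply/coJacobi | apply/cocycle/axes; exists a, b, c].
Qed.
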